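(* In the setting below, for every $\Delta\in\mathcal M_{\le q(\varepsilon)}$, every $a\in(\mathcal K_r(\alpha)\cap\Delta)\setminus X$, and every chain $S$ of $a$ and $\Delta$, it holds that $|S|\le q(\varepsilon)$.
   Context: Let $I=(E,(\mathcal I_1,\mathcal I_2),c,p,\beta)$ be a BI instance: $(E,\mathcal I_1),(E,\mathcal I_2)$ matroids, $c,p:E\to\mathbb R_{\ge0}$, $\beta\ge0$, $\mathcal M=\mathcal I_1\cap\mathcal I_2$, a solution is $S\in\mathcal M$ with $c(S)\le\beta$, and $\mathrm{OPT}(I)$ is the maximum of $p(S)=\sum_{e\in S}p(e)$ over solutions. Fix $0<\varepsilon<\tfrac12$, $\tfrac{\mathrm{OPT}(I)}2\le\alpha\le\mathrm{OPT}(I)$, $r\in\{1,\dots,\lfloor\log_{1-\varepsilon}(\varepsilon/2)+1\rfloor\}$. Let $q(\varepsilon)=\lceil\varepsilon^{-1/\varepsilon}\rceil$, $\mathcal M_{\le q(\varepsilon)}=\{A\in\mathcal M:|A|\le q(\varepsilon)\}$, $\mathcal K_r(\alpha)=\{e\in E:\tfrac{p(e)}{2\alpha}\in((1-\varepsilon)^r,(1-\varepsilon)^{r-1}]\}$, $A+e=A\cup\{e\}$, $A-e=A\setminus\{e\}$. For $S\subseteq\mathcal K_r(\alpha)$ let $U_S=\{e\in\mathcal K_r(\alpha)\setminus S: S+e\in\mathcal I_1\}$, and if $|S|\le q(\varepsilon)$ let $B_S$ be a (fixed) minimum-cost basis w.r.t. $c$ of the matroid on ground set $U_S$ with independent sets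 $\{A\in\mathcal I_2: A\subseteq U_S,|A|\le q(\varepsilon)\}$. Let $\mathcal S$ (the branches) be the smallest family of sets with $\emptyset\in\mathcal S$ and such that $S+e\in\mathcal S$ whenever $S\in\mathcal S$, $|S|\le q(\varepsilon)$ and $e\in B_S$. Let $X=\bigcup_{S\in\mathcal S,\,|S|\le q(\varepsilon)}B_S$. For $\Delta\in\mathcal M_{\le q(\varepsilon)}$, $a\in\Delta\cap\mathcal K_r(\alpha)$, $b\in\mathcal K_r(\alpha)\setminus\Delta$: $b$ is a semi-shift to $a$ for $\Delta$ if $c(b)\le c(a)$, $\Delta-a+b\in\mathcal I_2$ and $\Delta-a+b\notin\mathcal I_1$. For $\Delta\in\mathcal M_{\le q(\varepsilon)}$ and $a\in(\mathcal K_r(\alpha)\cap\Delta)\setminus X$, a set $S\in\mathcal S$ is a chain of $a$ and $\Delta$ if $a\in U_S$ and every $e\in S$ is a semi-shift to $a$ for $\Delta$. *)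

From HB Require Import structures.
From mathcomp Require Import all_boot all_order all_algebra.
From mathcomp Require Import reals exp.
Set Implicit Arguments. Unset Strict Implicit. Unset Printing Implicit Defensive.
Import Order.TTheory GRing.Theory Num.Theory.
Local Open Scope ring_scope.

Section Defs.
Variable T : finType.
Variable R : realType.

Definition is_matroid (I : pred {set T}) : Prop :=
  [/\ I set0,
      (forall A B : {set T}, B \subset A -> I A -> I B) &
      (forall A B : {set T}, I A -> I B -> #|A| < #|B| ->
          exists2 x, x \in B :\: A & I (x |: A))]%N.

Definition costs (c : T -> R) (A : {set T}) : R := \sum_(e in A) c e.

Definition is_solution (I1 I2 : pred {set T}) (c : T -> R) (beta : R)
  (S : {set T}) : bool := [&& I1 S, I2 S & costs c S <= beta].

(* OPT(I): maximum profit of a solution (the empty set is a solution). *)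
Definition OPT (I1 I2 : pred {set T}) (c p : T -> R) (beta : R) : R :=
  \big[Num.max/0]_(S : {set T} | is_solution I1 I2 c beta S) costs p S.

Definition qeps (eps : R) : nat := `|Num.ceil (eps `^ (- eps^-1))|%N.

Definition Kr (p : T -> R) (alpha eps : R) (r : nat) : {set T} :=
  [set e | ((1 - eps) ^+ r < p e / (2 * alpha)) &&
           (p e / (2 * alpha) <= (1 - eps) ^+ r.-1)].

Definition U_S (I1 : pred {set T}) (K S : {set T}) : {set T} :=
  [set e in K :\: S | I1 (e |: S)].

Definition trunc_indep (I2 : pred {set T}) (U : {set T}) (q : nat)
  (A : {set T}) : bool := [&& I2 A, A \subset U & (#|A| <= q)%N].

Definition is_basis (J : pred {set T}) (B : {set T}) : Prop :=
  J B /\ (forall A : {set T}, B \subset A -> J A -> A = B).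

Definition is_min_cost_basis (J : pred {set T}) (c : T -> R) (B : {set T})
  : Prop :=
  is_basis J B /\ (forall B', is_basis J B' -> costs c B <= costs c B').

Inductive branch (Bf : {set T} -> {set T}) (q : nat) : {set T} -> Prop :=
| branch0 : branch Bf q set0
| branchS S e : branch Bf q S -> (#|S| <= q)%N -> e \in Bf S ->
                branch Bf q (e |: S).

Definition inX (Bf : {set T} -> {set T}) (q : nat) (x : T) : Prop :=
  exists S, [/\ branch Bf q S, (#|S| <= q)%N & x \in Bf S].

Definition semi_shift (I1 I2 : pred {set T}) (c : T -> R) (K : {set T})
  (Delta : {set T}) (a b : T) : Prop :=
  [/\ a \in Delta :&: K, b \in K :\: Delta, c b <= c a,
      I2 (b |: (Delta :\ a)) & ~~ I1 (b |: (Delta :\ a))].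

Definition is_chain (I1 I2 : pred {set T}) (c : T -> R) (K : {set T})
  (Bf : {set T} -> {set T}) (q : nat) (a : T) (Delta S : {set T}) : Prop :=
  [/\ branch Bf q S, a \in U_S I1 K S &
      forall e, e \in S -> semi_shift I1 I2 c K Delta a e].

End Defs.

From HB Require Import structures.
From mathcomp Require Import all_boot all_order all_algebra.
From mathcomp Require Import reals exp.
Import Order.TTheory GRing.Theory Num.Theory.
Local Open Scope ring_scope.

(* Every element of a chain [S] of [a] and [Delta] is dependent when added to
   [Delta - a], while [S] itself is independent in the first matroid because
   [S + a] is.  By the augmentation axiom an independent set none of whose
   elements extends [Delta - a] has at most [|Delta - a| < |Delta| <= q]
   elements. *)

Section Matroid.
Context {T : finType} {I : pred {set T}}.
Implicit Types A B S : {set T}.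
Hypothesis matroidI : is_matroid I.

Lemma matroid_indep_subset {A B} : B \subset A -> I A -> I B.
Proof. by case: matroidI => _ subI _; exact: subI. Qed.

Lemma matroid_card_le_of_dependent_extensions {A S} :
  I A -> I S -> (forall e, e \in S -> ~~ I (e |: A)) -> (#|S| <= #|A|)%N.
Proof.
move=> IA IS depS; rewrite leqNgt; apply/negP => ltAS.
case: matroidI => _ _ augI.
have [x /setDP [xS _] Ix] := augI _ _ IA IS ltAS.
by move/negP: (depS x xS).
Qed.

Lemma indep_of_mem_U_S {K S} {a : T} : a \in U_S I K S -> I S.
Proof.
by rewrite inE => /andP [_ IaS]; exact: matroid_indep_subset (subsetUr _ _) IaS.
Qed.

End Matroid.

Lemma chain_card_lt {T : finType} {R : realType} {I1 I2 : pred {set T}}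
  {c : T -> R} {K : {set T}} {Bf : {set T} -> {set T}} {q : nat}
  {a : T} {Delta S : {set T}} :
  is_matroid I1 -> I1 Delta -> a \in Delta ->
  is_chain I1 I2 c K Bf q a Delta S -> (#|S| < #|Delta|)%N.
Proof.
move=> matroidI1 I1D aD [_ aU shiftS].
have I1Da : I1 (Delta :\ a) := matroid_indep_subset matroidI1 (subD1set _ _) I1D.
have depS e : e \in S -> ~~ I1 (e |: (Delta :\ a)) by case/shiftS.
have := matroid_card_le_of_dependent_extensions matroidI1 I1Da
  (indep_of_mem_U_S matroidI1 aU) depS.
by rewrite (cardsD1 a Delta) aD add1n ltnS.
Qed.

Theorem mainTheorem13 (T : finType) (R : realType)
  (I1 I2 : pred {set T}) (c p : T -> R) (beta eps alpha : R) (r : nat)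
  (Bf : {set T} -> {set T}) :
  is_matroid I1 -> is_matroid I2 ->
  (forall e, 0 <= c e) -> (forall e, 0 <= p e) -> 0 <= beta ->
  0 < eps -> eps < 1 / 2 ->
  OPT I1 I2 c p beta / 2 <= alpha -> alpha <= OPT I1 I2 c p beta ->
  (1 <= r)%N ->
  (r%:Z <= Num.floor (ln (eps / 2) / ln (1 - eps) + 1))%R ->
  (forall S : {set T}, S \subset Kr p alpha eps r -> (#|S| <= qeps eps)%N ->
     is_min_cost_basis
       (trunc_indep I2 (U_S I1 (Kr p alpha eps r) S) (qeps eps)) c (Bf S)) ->
  forall (Delta : {set T}) (a : T) (S : {set T}),
    I1 Delta -> I2 Delta -> (#|Delta| <= qeps eps)%N ->
    a \in Kr p alpha eps r :&: Delta -> ~ inX Bf (qeps eps) a ->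
    is_chain I1 I2 c (Kr p alpha eps r) Bf (qeps eps) a Delta S ->
    (#|S| <= qeps eps)%N.
Proof.
move=> matroidI1 _ _ _ _ _ _ _ _ _ _ _ Delta a S I1D _ cardD aKD _ chainS.
have aD : a \in Delta by case/setIP: aKD.
have ltSD := chain_card_lt matroidI1 I1D aD chainS.
exact: ltnW (leq_trans ltSD cardD).
Qed.
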